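(* Let $\{\mathbf{x}^k=(\mathbf{x}_{(i)}^k)_i\}$, $\{\mathbf{y}^k=(\mathbf{y}_{(i)}^k)_i\}$, $\{\phi^k\}$ be generated by SONATA in the setting below, and let $\widetilde{\mathbf{x}}_i^k$ be the local minimizers it computes. There is a finite constant $B_2>0$, independent of $k$, such that for all $k\ge0$ and $i=1,\dots,I$, $$\|\widetilde{\mathbf{x}}_i^k-\widehat{\mathbf{x}}_i(\mathbf{x}_{(i)}^k)\|\le B_2\Big(\|\mathbf{y}_{(i)}^k-\bar{\mathbf{y}}_\phi^k\|+\sum_{j=1}^I\|\mathbf{x}_{(j)}^k-\bar{\mathbf{x}}_\phi^k\|\Big),$$ where $\bar{\mathbf{x}}_\phi^k\triangleq\frac1I\sum_{j}\phi_{(j)}^k\mathbf{x}_{(j)}^k$ and $\bar{\mathbf{y}}_\phi^k\triangleq\frac1I\sum_j\phi_{(j)}^k\mathbf{y}_{(j)}^k$.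
   Context: Problem: minimize $V(\mathbf{x})\triangleq F(\mathbf{x})+G(\mathbf{x})$, $F=\sum_{i=1}^If_i$, over $\mathbf{x}\in X$, where $X\subseteq\mathbb{R}^m$ is nonempty closed convex; each $f_i:O\to\mathbb{R}$ is $C^1$ on an open set $O\supseteq X$ with $\nabla f_i$ $L_i$-Lipschitz on $X$; $G:O\to\mathbb{R}$ is convex; $V$ is bounded below on $X$. Network: digraphs $G^k=(\{1,\dots,I\},E^k)$, $(j,i)\in E^k$ meaning $j$ can send to $i$, $B$-strongly connected ($\bigcup_{t=k}^{k+B-1}E^t$ strongly connected for every $k$). $\mathbf{A}^k=(a_{ij}^k)$: $a_{ij}^k=0$ if $j\ne i$ and $(j,i)\notin E^k$, $a_{ij}^k\ge\kappa$ if $(j,i)\in E^k$, $a_{ii}^k\ge\kappa$ ($\kappa>0$), nonnegative with $\mathbf{1}^T\mathbf{A}^k=\mathbf{1}^T$. Assumption III.14 on $\widetilde f_i:O\times O\to\mathbb{R}$: $\widetilde f_i(\cdot|\mathbf{x})$ is $\tau_i$-strongly convex on $X$ for all $\mathbf{x}\in X$; $C^1$ on $O$ with $\nabla\widetilde f_i(\mathbf{x}|\mathbf{x})=\nabla f_i(\mathbf{x})$; $\nabla\widetilde f_i(\mathbf{x}|\cdot)$ is $\widetilde L_i$-Lipschitz on $X$. SONATA with step-sizes $\gamma^k\in(0,1]$: initialize $\mathbf{x}_{(i)}^0\in X$, $\phi_{(i)}^0=1$, $\mathbf{y}_{(i)}^0=\nabla f_i(\mathbf{x}_{(i)}^0)$;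 at iteration $k$, $\widetilde{\mathbf{x}}_i^k=\operatorname{argmin}_{\mathbf{x}\in X}\{\widetilde f_i(\mathbf{x}|\mathbf{x}_{(i)}^k)+(I\mathbf{y}_{(i)}^k-\nabla f_i(\mathbf{x}_{(i)}^k))^T(\mathbf{x}-\mathbf{x}_{(i)}^k)+G(\mathbf{x})\}$, $\mathbf{x}_{(i)}^{k+1/2}=\mathbf{x}_{(i)}^k+\gamma^k(\widetilde{\mathbf{x}}_i^k-\mathbf{x}_{(i)}^k)$, $\phi_{(i)}^{k+1}=\sum_ja_{ij}^k\phi_{(j)}^k$, $\mathbf{x}_{(i)}^{k+1}=\frac{1}{\phi_{(i)}^{k+1}}\sum_ja_{ij}^k\phi_{(j)}^k\mathbf{x}_{(j)}^{k+1/2}$, $\mathbf{y}_{(i)}^{k+1}=\frac{1}{\phi_{(i)}^{k+1}}\sum_ja_{ij}^k\phi_{(j)}^k\mathbf{y}_{(j)}^k+\frac{1}{\phi_{(i)}^{k+1}}(\nabla f_i(\mathbf{x}_{(i)}^{k+1})-\nabla f_i(\mathbf{x}_{(i)}^k))$. The map $\widehat{\mathbf{x}}_i(\mathbf{z})\triangleq\operatorname{argmin}_{\mathbf{x}\in X}\{\widetilde f_i(\mathbf{x}|\mathbf{z})+(\nabla F(\mathbf{z})-\nabla f_i(\mathbf{z}))^T(\mathbf{x}-\mathbf{z})+G(\mathbf{x})\}$ for $\mathbf{z}\in X$. *)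

From Stdlib Require Import Reals Relations.
From mathcomp Require Import ssreflect ssrfun ssrbool eqtype ssrnat seq fintype bigop.
Set Implicit Arguments. Unset Strict Implicit. Unset Printing Implicit Defensive.

Open Scope R_scope.

Definition vec (m : nat) : Type := 'I_m -> R.

Definition vzero {m} : vec m := fun _ => 0.
Definition vadd {m} (u v : vec m) : vec m := fun c => u c + v c.
Definition vsub {m} (u v : vec m) : vec m := fun c => u c - v c.
Definition vscale {m} (a : R) (u : vec m) : vec m := fun c => a * u c.
Definition dot {m} (u v : vec m) : R := \big[Rplus/0]_(c < m) (u c * v c).
Definition norm {m} (u : vec m) : R := sqrt (dot u u).

Definition vsum {m n} (F : 'I_n -> vec m) : vec m :=
  fun c => \big[Rplus/0]_(j < n) F j c.
Definition rsum {n} (F : 'I_n -> R) : R := \big[Rplus/0]_(j < n) F j.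

Definition is_open {m} (O : vec m -> Prop) : Prop :=
  forall x, O x -> exists e, 0 < e /\ forall y, norm (vsub y x) < e -> O y.
Definition is_closed {m} (X : vec m -> Prop) : Prop :=
  is_open (fun x => ~ X x).
Definition convex_set {m} (X : vec m -> Prop) : Prop :=
  forall x y t, X x -> X y -> 0 <= t <= 1 ->
    X (vadd (vscale (1 - t) x) (vscale t y)).
Definition nonempty {m} (X : vec m -> Prop) : Prop := exists x, X x.
Definition set_incl {m} (X O : vec m -> Prop) : Prop := forall x, X x -> O x.

Definition convex_on {m} (S : vec m -> Prop) (g : vec m -> R) : Prop :=
  forall x y t, S x -> S y -> 0 <= t <= 1 ->
    S (vadd (vscale (1 - t) x) (vscale t y)) ->
    g (vadd (vscale (1 - t) x) (vscale t y)) <= (1 - t) * g x + t * g y.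

Definition strongly_convex_on {m} (tau : R) (X : vec m -> Prop) (g : vec m -> R) : Prop :=
  0 < tau /\
  forall x y t, X x -> X y -> 0 <= t <= 1 ->
    g (vadd (vscale (1 - t) x) (vscale t y))
      <= (1 - t) * g x + t * g y - tau / 2 * t * (1 - t) * (norm (vsub x y)) ^ 2.

Definition has_gradient {m} (g : vec m -> R) (gx : vec m) (x : vec m) : Prop :=
  forall eps, 0 < eps -> exists delta, 0 < delta /\
    forall h, norm h < delta ->
      Rabs (g (vadd x h) - g x - dot gx h) <= eps * norm h.

Definition continuous_on_vec {m} (O : vec m -> Prop) (G : vec m -> vec m) : Prop :=
  forall x, O x -> forall eps, 0 < eps -> exists delta, 0 < delta /\
    forall y, O y -> norm (vsub y x) < delta -> norm (vsub (G y) (G x)) < eps.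

Definition C1_on {m} (O : vec m -> Prop) (g : vec m -> R) (dg : vec m -> vec m) : Prop :=
  (forall x, O x -> has_gradient g (dg x) x) /\ continuous_on_vec O dg.

Definition lipschitz_on {m} (X : vec m -> Prop) (L : R) (G : vec m -> vec m) : Prop :=
  forall x y, X x -> X y -> norm (vsub (G x) (G y)) <= L * norm (vsub x y).

Definition is_argmin {m} (X : vec m -> Prop) (h : vec m -> R) (w : vec m) : Prop :=
  X w /\ forall z, X z -> h w <= h z.

(* E k j i : (j,i) \in E^k, i.e. j can send to i at time k *)
Definition strongly_connected {n} (Ed : 'I_n -> 'I_n -> Prop) : Prop :=
  forall i j : 'I_n, clos_refl_trans _ Ed i j.

Definition B_strongly_connected {n} (B : nat) (E : nat -> 'I_n -> 'I_n -> Prop) : Prop :=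
  forall k : nat,
    strongly_connected (fun j i => exists t : nat, (k <= t)%nat /\ (t < k + B)%nat /\ E t j i).

(* weight matrices a k i j = a_{ij}^k compatible with E, column stochastic *)
Definition compatible_weights {n} (kappa : R) (E : nat -> 'I_n -> 'I_n -> Prop)
  (a : nat -> 'I_n -> 'I_n -> R) : Prop :=
  0 < kappa /\
  (forall k i j, 0 <= a k i j) /\
  (forall k i j, j <> i -> ~ E k j i -> a k i j = 0) /\
  (forall k i j, E k j i -> kappa <= a k i j) /\
  (forall k i, kappa <= a k i i) /\
  (forall k j, rsum (fun i => a k i j) = 1).

From Stdlib Require Import Reals Relations.
From mathcomp Require Import ssreflect ssrfun ssrbool eqtype ssrnat seq fintype bigop.
Open Scope R_scope.
From HB Require Import structures.
From Stdlib Require Import Lra FunctionalExtensionality.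
Set Implicit Arguments. Unset Strict Implicit.

(* Both the SONATA step x~_i and the exact local step x^_i minimize the same
   tau_i-strongly convex function up to a linear term, so they are at most
   (2 / tau_i) times the gap between the two slopes, I y_i - sum_j grad f_j (x_i),
   apart.  Column stochasticity keeps sum_j phi_j y_j = sum_j grad f_j (x_j) invariant,
   so the slope gap equals I (y_i - ybar_phi) + sum_j (grad f_j (x_j) - grad f_j (x_i)),
   and the Lipschitz bounds with a triangle inequality through xbar_phi finish the job. *)

Lemma RplusA : associative Rplus. Proof. by move=> *; lra. Qed.
Lemma RplusC : commutative Rplus. Proof. by move=> *; lra. Qed.
Lemma Rplus0 : left_id 0 Rplus. Proof. by move=> *; lra. Qed.
HB.instance Definition _ := Monoid.isComLaw.Build R 0 Rplus RplusA RplusC Rplus0.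
Lemma RmultDl : left_distributive Rmult Rplus. Proof. by move=> *; lra. Qed.
Lemma RmultDr : right_distributive Rmult Rplus. Proof. by move=> *; lra. Qed.
Lemma Rmult0 : left_zero 0 Rmult. Proof. by move=> *; lra. Qed.
Lemma Rmult0r : right_zero 0 Rmult. Proof. by move=> *; lra. Qed.
HB.instance Definition _ := Monoid.isMulLaw.Build R 0 Rmult Rmult0 Rmult0r.
HB.instance Definition _ := Monoid.isAddLaw.Build R Rmult Rplus RmultDl RmultDr.

Section RealSums.
Variable n : nat.
Implicit Types F H : 'I_n -> R.

Lemma sum_le F H : (forall j, F j <= H j) ->
  \big[Rplus/0]_(j < n) F j <= \big[Rplus/0]_(j < n) H j.
Proof. by move=> FH; apply: (big_ind2 (fun a b => a <= b)) => // *; lra. Qed.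

Lemma sum_ge0 F : (forall j, 0 <= F j) -> 0 <= \big[Rplus/0]_(j < n) F j.
Proof. by move=> F0; apply: (big_ind (fun a => 0 <= a)) => // *; lra. Qed.

Lemma sum_ge_term F i : (forall j, 0 <= F j) -> F i <= \big[Rplus/0]_(j < n) F j.
Proof.
move=> F0; rewrite (bigD1 i) //= -{1}(Rplus_0_r (F i)).
by apply: Rplus_le_compat_l; apply: (big_ind (fun a => 0 <= a)) => // *; lra.
Qed.

Lemma sumB F H :
  \big[Rplus/0]_(j < n) (F j - H j) = \big[Rplus/0]_(j < n) F j - \big[Rplus/0]_(j < n) H j.
Proof.
rewrite (eq_bigr (fun j => F j + (-1) * H j)) => [|j _]; last by ring.
by rewrite big_split -big_distrr /=; ring.
Qed.

End RealSums.

Section EuclideanNorm.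
Variable m : nat.
Implicit Types u v w : vec m.

Lemma dot_sym u v : dot u v = dot v u.
Proof. by apply: eq_bigr => c _; ring. Qed.

Lemma dot_vsubl u v w : dot (vsub u v) w = dot u w - dot v w.
Proof. by rewrite /dot -sumB; apply: eq_bigr => c _; rewrite /vsub; ring. Qed.

Lemma dot_vsubr u v w : dot u (vsub v w) = dot u v - dot u w.
Proof. by rewrite dot_sym dot_vsubl !(dot_sym u). Qed.

Lemma dot_self_ge0 u : 0 <= dot u u.
Proof. by apply: sum_ge0 => c; nra. Qed.

Lemma norm_ge0 u : 0 <= norm u.
Proof. exact: sqrt_pos. Qed.

Lemma norm_sq u : norm u * norm u = dot u u.
Proof. by rewrite /norm sqrt_sqrt //; exact: dot_self_ge0. Qed.

Lemma norm_eq0 u : norm u = 0 -> u = vzero.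
Proof.
move=> u0; apply: functional_extensionality => c.
have := @sum_ge_term m (fun c => u c * u c) c (fun c => ltac:(nra)).
rewrite -/(dot u u) -norm_sq u0 /vzero => ?; nra.
Qed.

Lemma dot0l v : dot vzero v = 0.
Proof. by rewrite /dot big1 // => c _; rewrite /vzero; ring. Qed.

Lemma dot_vscale a b u v : dot (vscale a u) (vscale b v) = a * b * dot u v.
Proof. by rewrite /dot big_distrr /=; apply: eq_bigr => c _; rewrite /vscale; ring. Qed.

Lemma norm_vscale a u : norm (vscale a u) = Rabs a * norm u.
Proof.
rewrite /norm dot_vscale sqrt_mult_alt; last by nra.
by rewrite -/(Rsqr a) sqrt_Rsqr_abs.
Qed.

Lemma Cauchy_Schwarz u v : dot u v <= norm u * norm v.
Proof.
have [u0|nu0] := Req_dec (norm u) 0; first by rewrite u0 (norm_eq0 u0) dot0l; lra.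
have [v0|nv0] := Req_dec (norm v) 0.
  by rewrite v0 dot_sym (norm_eq0 v0) dot0l; lra.
have nu := norm_ge0 u; have nv := norm_ge0 v.
set a := norm u in nu0 nu *; set b := norm v in nv0 nv *.
have := dot_self_ge0 (vsub (vscale b u) (vscale a v)).
rewrite !dot_vsubl !dot_vsubr !dot_vscale (dot_sym v u) -!norm_sq -/a -/b.
have : 0 < a * b by apply: Rmult_lt_0_compat; lra.
nra.
Qed.

Lemma norm_vadd_le u v : norm (vadd u v) <= norm u + norm v.
Proof.
have nu := norm_ge0 u; have nv := norm_ge0 v; have cs := Cauchy_Schwarz u v.
rewrite {1}/norm; have -> : dot (vadd u v) (vadd u v) = dot u u + 2 * dot u v + dot v v.
  by rewrite /dot big_distrr -!big_split /=; apply: eq_bigr => c _; rewrite /vadd /=; ring.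
rewrite -(sqrt_square (norm u + norm v)); last lra.
by apply: sqrt_le_1_alt; rewrite -!norm_sq; nra.
Qed.

Lemma norm_vsubC u v : norm (vsub u v) = norm (vsub v u).
Proof.
have -> : vsub u v = vscale (-1) (vsub v u).
  by apply: functional_extensionality => c; rewrite /vsub /vscale; ring.
by rewrite norm_vscale Rabs_Ropp Rabs_R1 Rmult_1_l.
Qed.

Lemma norm_vsub_triangle u v w : norm (vsub u w) <= norm (vsub u v) + norm (vsub v w).
Proof.
have -> : vsub u w = vadd (vsub u v) (vsub v w).
  by apply: functional_extensionality => c; rewrite /vsub /vadd; ring.
exact: norm_vadd_le.
Qed.

Lemma norm_vsum_le n (F : 'I_n -> vec m) :
  norm (vsum F) <= \big[Rplus/0]_(j < n) norm (F j).
Proof.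
elim: n F => [|n IH] F.
  have -> : vsum F = vzero by apply: functional_extensionality => c; rewrite /vsum big_ord0.
  by rewrite big_ord0 /norm dot0l sqrt_0; lra.
have -> : vsum F = vadd (vsum (fun j : 'I_n => F (widen_ord (leqnSn n) j))) (F ord_max).
  by apply: functional_extensionality => c; rewrite /vsum big_ord_recr.
rewrite big_ord_recr /=.
apply: Rle_trans (norm_vadd_le _ _) _.
by apply: Rplus_le_compat_r; exact: IH.
Qed.

End EuclideanNorm.

Lemma convex_set_weighted_mean m (X : vec m -> Prop) n (w : 'I_n -> R) (p : 'I_n -> vec m) :
  convex_set X -> (forall j, 0 <= w j) -> (forall j, X (p j)) ->
  0 < \big[Rplus/0]_(j < n) w j ->
  X (vscale (/ \big[Rplus/0]_(j < n) w j) (vsum (fun j => vscale (w j) (p j)))).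
Proof.
move=> convX; elim: n w p => [|n IH] w p w0 Xp; first by rewrite big_ord0; lra.
rewrite big_ord_recr /=.
set w' := fun j : 'I_n => w (widen_ord (leqnSn n) j).
set p' := fun j : 'I_n => p (widen_ord (leqnSn n) j).
set s := \big[Rplus/0]_(j < n) w' j => sum_pos.
have [s0|s_neq0] := Req_dec s 0.
  have w'0 : forall j, w' j = 0.
    move=> j; have := @sum_ge_term n w' j (fun j => w0 _).
    by rewrite -/s s0; have := w0 (widen_ord (leqnSn n) j); rewrite /w'; lra.
  have -> : vscale (/ (s + w ord_max)) (vsum (fun j => vscale (w j) (p j))) = p ord_max.
    apply: functional_extensionality => c.
    rewrite /vscale /vsum big_ord_recr /= big1 => [|j _].
      by rewrite s0 in sum_pos *; field; lra.
    by have := w'0 j; rewrite /w' => ->; ring.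
  exact: Xp.
have s_pos : 0 < s by have := sum_ge0 (fun j => w0 (widen_ord (leqnSn n) j)); rewrite -/s; lra.
have Xmean' := IH w' p' (fun j => w0 _) (fun j => Xp _) s_pos.
set t := w ord_max / (s + w ord_max).
have t01 : 0 <= t <= 1.
  rewrite /t; split.
    by apply: Rmult_le_pos => //; apply: Rlt_le; apply: Rinv_0_lt_compat; lra.
  by apply: (Rmult_le_reg_r (s + w ord_max)); [lra | rewrite /Rdiv Rmult_assoc Rinv_l; lra].
have := convX _ _ t Xmean' (Xp ord_max) t01.
have -> // : vadd (vscale (1 - t) (vscale (/ s) (vsum (fun j => vscale (w' j) (p' j)))))
    (vscale t (p ord_max)) = vscale (/ (s + w ord_max)) (vsum (fun j => vscale (w j) (p j))).
apply: functional_extensionality => c.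
by rewrite /vadd /vscale /vsum big_ord_recr /= /t /w' /p'; field; lra.
Qed.

Lemma strongly_convex_argmin_lipschitz m (X O : vec m -> Prop) (g G : vec m -> R) tau
    (x0 l1 l2 w1 w2 : vec m) :
  convex_set X -> set_incl X O -> strongly_convex_on tau X g -> convex_on O G ->
  is_argmin X (fun z => g z + dot l1 (vsub z x0) + G z) w1 ->
  is_argmin X (fun z => g z + dot l2 (vsub z x0) + G z) w2 ->
  norm (vsub w1 w2) <= 2 / tau * norm (vsub l1 l2).
Proof.
move=> convX XO [tau_pos sc_g] convG [Xw1 min1] [Xw2 min2].
have half : 0 <= 1 / 2 <= 1 by lra.
set p := vadd (vscale (1 - 1 / 2) w1) (vscale (1 / 2) w2).
have Xp : X p := convX _ _ _ Xw1 Xw2 half.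
have g_mid := sc_g _ _ _ Xw1 Xw2 half.
have G_mid := convG _ _ _ (XO _ Xw1) (XO _ Xw2) half (XO _ Xp).
have h1 := min1 _ Xp; have h2 := min2 _ Xp.
have dot_mid : forall l, dot l (vsub p x0) = (dot l (vsub w1 x0) + dot l (vsub w2 x0)) / 2.
  move=> l; rewrite /dot -big_split /= /Rdiv big_distrl /=.
  by apply: eq_bigr => c _; rewrite /vsub /p /vadd /vscale; field.
rewrite !dot_mid /= -/p in h1 h2 g_mid G_mid.
have cross : dot (vsub l1 l2) (vsub w2 w1)
    = dot l1 (vsub w2 x0) - dot l1 (vsub w1 x0) - dot l2 (vsub w2 x0) + dot l2 (vsub w1 x0).
  have -> : vsub w2 w1 = vsub (vsub w2 x0) (vsub w1 x0).
    by apply: functional_extensionality => c; rewrite /vsub; ring.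
  by rewrite dot_vsubl !dot_vsubr; ring.
have cs := Cauchy_Schwarz (vsub l1 l2) (vsub w2 w1).
rewrite cross (norm_vsubC w2 w1) in cs.
set d := norm (vsub w1 w2) in g_mid cs *; set N := norm (vsub l1 l2) in cs *.
have d0 : 0 <= d := norm_ge0 _.
have N0 : 0 <= N := norm_ge0 _.
(* minimality of w1, w2 against the midpoint plus strong convexity: tau d^2 / 4 <= N d / 2 *)
have quad : tau * (d * d) <= 2 * (N * d) by rewrite /= Rmult_1_r in g_mid; nra.
have [d_pos|<-] := d0; last first.
  by apply: Rmult_le_pos => //; apply: Rlt_le; apply: Rdiv_lt_0_compat; lra.
have lin : tau * d <= 2 * N by apply: (Rmult_le_reg_r d) => //; nra.
apply: (Rmult_le_reg_l tau) => //.
by have -> : tau * (2 / tau * N) = 2 * N by field; lra.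
Qed.

Section ColumnStochasticMixing.
Variables (I : nat) (a : nat -> 'I_I -> 'I_I -> R) (phi : nat -> 'I_I -> R).
Hypothesis a_ge0 : forall k i j, 0 <= a k i j.
Hypothesis a_diag_pos : forall k i, 0 < a k i i.
Hypothesis phi0_pos : forall i, 0 < phi 0%nat i.
Hypothesis phiS : forall k i, phi k.+1 i = rsum (fun j => a k i j * phi k j).

Lemma mixing_weights_pos k i : 0 < phi k i.
Proof.
elim: k i => [|k IH] i; first exact: phi0_pos.
rewrite phiS; apply: Rlt_le_trans (_ : a k i i * phi k i <= _).
  exact: Rmult_lt_0_compat.
apply: (@sum_ge_term _ (fun j => a k i j * phi k j)) => j.
by apply: Rmult_le_pos => //; apply: Rlt_le.
Qed.

Variables (m : nat) (X : vec m -> Prop) (gamma : nat -> R) (x xhalf xt : nat -> 'I_I -> vec m).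
Hypothesis convX : convex_set X.
Hypothesis gamma01 : forall k, 0 <= gamma k <= 1.
Hypothesis x0_in : forall i, X (x 0%nat i).
Hypothesis xt_in : forall k i, X (xt k i).
Hypothesis xhalf_def : forall k i,
  xhalf k i = vadd (x k i) (vscale (gamma k) (vsub (xt k i) (x k i))).
Hypothesis xS : forall k i,
  x k.+1 i = vscale (/ phi k.+1 i) (vsum (fun j => vscale (a k i j * phi k j) (xhalf k j))).

Lemma mixed_iterates_in k i : X (x k i).
Proof.
elim: k i => [|k IH] i; first exact: x0_in.
have Xhalf j : X (xhalf k j).
  have -> : xhalf k j = vadd (vscale (1 - gamma k) (x k j)) (vscale (gamma k) (xt k j)).
    by rewrite xhalf_def; apply: functional_extensionality => c; rewrite /vadd /vscale /vsub; ring.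
  by apply: convX => //; have := gamma01 k; lra.
rewrite xS phiS.
apply: convex_set_weighted_mean => // [j|].
  by apply: Rmult_le_pos => //; apply: Rlt_le; exact: mixing_weights_pos.
by rewrite -/(rsum _) -phiS; exact: mixing_weights_pos.
Qed.

End ColumnStochasticMixing.

Section GradientTracking.
Variables (m I : nat) (a : nat -> 'I_I -> 'I_I -> R) (phi : nat -> 'I_I -> R).
Variables (gf : 'I_I -> vec m -> vec m) (x y : nat -> 'I_I -> vec m).
Hypothesis a_col_sum : forall k j, rsum (fun i => a k i j) = 1.
Hypothesis phi_pos : forall k i, 0 < phi k i.
Hypothesis phi0 : forall i, phi 0%nat i = 1.
Hypothesis y0 : forall i, y 0%nat i = gf i (x 0%nat i).
Hypothesis yS : forall k i,
  y k.+1 i = vadd (vscale (/ phi k.+1 i) (vsum (fun j => vscale (a k i j * phi k j) (y k j))))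
                  (vscale (/ phi k.+1 i) (vsub (gf i (x k.+1 i)) (gf i (x k i)))).

(* column stochasticity conserves the phi-weighted sum, so only the gradient increments change it *)
Lemma weighted_tracking_sum k :
  vsum (fun j => vscale (phi k j) (y k j)) = vsum (fun j => gf j (x k j)).
Proof.
apply: functional_extensionality; elim: k => [|k IH] c.
  by apply: eq_bigr => j _; rewrite /vscale phi0 y0; ring.
have yS_weighted j : phi k.+1 j * y k.+1 j c
    = \big[Rplus/0]_(l < I) (a k j l * (phi k l * y k l c)) + (gf j (x k.+1 j) c - gf j (x k j) c).
  rewrite yS /vadd /vscale /vsum /vsub.
  rewrite (eq_bigr (fun l => a k j l * (phi k l * y k l c))) => [|l _]; last by ring.
  have := phi_pos k.+1 j => ?; rewrite Rmult_plus_distr_l -!Rmult_assoc Rinv_r ?Rmult_1_l //; lra.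
rewrite /vsum /vscale (eq_bigr _ (fun j _ => yS_weighted j)) big_split sumB exchange_big /=.
rewrite (eq_bigr (fun l => phi k l * y k l c)) => [|l _].
  move: (IH c); rewrite /vsum /vscale => ->.
  by set A := \big[Rplus/0]_(j < I) _; set B := \big[Rplus/0]_(j < I) _; ring.
by rewrite -[RHS]Rmult_1_l -(a_col_sum k l) /rsum big_distrl /=; apply: eq_bigr => i _; ring.
Qed.

End GradientTracking.

Lemma tracking_gap_le m I (X : vec m -> Prop) (gf : 'I_I -> vec m -> vec m) (L : 'I_I -> R)
    (x y : 'I_I -> vec m) (phi : 'I_I -> R) (xb : vec m) (i : 'I_I) :
  (forall j, 0 <= L j /\ lipschitz_on X (L j) (gf j)) -> (forall j, X (x j)) ->
  vsum (fun j => vscale (phi j) (y j)) = vsum (fun j => gf j (x j)) ->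
  norm (vsub (vscale (INR I) (y i)) (vsum (fun j => gf j (x i))))
    <= INR I * norm (vsub (y i) (vscale (/ INR I) (vsum (fun j => vscale (phi j) (y j)))))
       + 2 * rsum L * rsum (fun j => norm (vsub (x j) xb)).
Proof.
move=> Lip Xx tracking.
have I_pos : 0 < INR I by apply: lt_0_INR; apply/ltP; exact: leq_ltn_trans (leq0n i) (ltn_ord i).
set yb := vscale (/ INR I) _; set Ls := rsum L; set Dx := rsum _.
have split_gap : vsub (vscale (INR I) (y i)) (vsum (fun j => gf j (x i)))
    = vadd (vscale (INR I) (vsub (y i) yb)) (vsum (fun j => vsub (gf j (x j)) (gf j (x i)))).
  apply: functional_extensionality => c.
  rewrite /yb tracking /vadd /vsub /vscale /vsum sumB.
  by set A := \big[Rplus/0]_(j < I) _; set B := \big[Rplus/0]_(j < I) _; field; lra.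
rewrite split_gap; apply: Rle_trans (norm_vadd_le _ _) _.
rewrite norm_vscale Rabs_right; last lra.
apply: Rplus_le_compat_l; apply: Rle_trans (norm_vsum_le _) _.
have dist_le j : norm (vsub (x j) xb) <= Dx.
  rewrite /Dx /rsum; apply: (@sum_ge_term _ (fun j => norm (vsub (x j) xb))) => l.
  exact: norm_ge0.
have L_le j : L j <= Ls by rewrite /Ls /rsum; apply: (@sum_ge_term _ L) => l; case: (Lip l).
apply: Rle_trans (_ : \big[Rplus/0]_(j < I) (Ls * norm (vsub (x j) xb) + L j * Dx) <= _).
  apply: sum_le => j; have [L0 Lj] := Lip j.
  have := Lj _ _ (Xx j) (Xx i); have := norm_vsub_triangle (x j) xb (x i).
  rewrite (norm_vsubC xb (x i)).
  have := dist_le i; have := L_le j; have := norm_ge0 (vsub (x j) xb).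
  have := norm_ge0 (vsub (x i) xb); nra.
by rewrite big_split -big_distrr -big_distrl /=; change (Ls * Dx + Ls * Dx <= 2 * Ls * Dx); lra.
Qed.

Lemma surrogate_step_gap_le m I (X O : vec m -> Prop) (g G : vec m -> R) tau
    (gf : 'I_I -> vec m -> vec m) (L : 'I_I -> R) (x y : 'I_I -> vec m) (phi : 'I_I -> R)
    (xb : vec m) (i : 'I_I) (w1 w2 : vec m) :
  convex_set X -> set_incl X O -> strongly_convex_on tau X g -> convex_on O G ->
  (forall j, 0 <= L j /\ lipschitz_on X (L j) (gf j)) -> (forall j, X (x j)) ->
  vsum (fun j => vscale (phi j) (y j)) = vsum (fun j => gf j (x j)) ->
  is_argmin X (fun z => g z + dot (vsub (vscale (INR I) (y i)) (gf i (x i))) (vsub z (x i))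
                        + G z) w1 ->
  is_argmin X (fun z => g z + dot (vsub (vsum (fun j => gf j (x i))) (gf i (x i))) (vsub z (x i))
                        + G z) w2 ->
  norm (vsub w1 w2)
    <= 2 / tau
       * (INR I * norm (vsub (y i) (vscale (/ INR I) (vsum (fun j => vscale (phi j) (y j)))))
          + 2 * rsum L * rsum (fun j => norm (vsub (x j) xb))).
Proof.
move=> convX XO sc_g convG Lip Xx tracking min1 min2.
have tau_pos : 0 < tau by case: sc_g.
apply: Rle_trans (strongly_convex_argmin_lipschitz convX XO sc_g convG min1 min2) _.
have -> : vsub (vsub (vscale (INR I) (y i)) (gf i (x i)))
               (vsub (vsum (fun j => gf j (x i))) (gf i (x i)))
        = vsub (vscale (INR I) (y i)) (vsum (fun j => gf j (x i))).
  by apply: functional_extensionality => c; rewrite /vsub; ring.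
apply: Rmult_le_compat_l; last exact: tracking_gap_le.
by apply: Rmult_le_pos; [lra | apply: Rlt_le; apply: Rinv_0_lt_compat].
Qed.

Lemma scaled_affine_le tau T c Ls Dy Dx :
  0 < tau -> / tau <= T -> 0 <= c -> 0 <= Ls -> 0 <= Dy -> 0 <= Dx ->
  2 / tau * (c * Dy + 2 * Ls * Dx) <= (2 * T * (c + 2 * Ls) + 1) * (Dy + Dx).
Proof.
move=> tau_pos inv_tau_le c0 Ls0 Dy0 Dx0.
have T0 : 0 <= T by have := Rinv_0_lt_compat _ tau_pos; lra.
apply: Rle_trans (_ : 2 * T * (c * Dy + 2 * Ls * Dx) <= _).
  rewrite /Rdiv !Rmult_assoc; apply: Rmult_le_compat_l; first lra.
  by apply: Rmult_le_compat_r; nra.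
have := Rmult_le_pos _ _ (Rmult_le_pos _ _ T0 c0) Dx0.
have := Rmult_le_pos _ _ (Rmult_le_pos _ _ T0 Ls0) Dy0.
nra.
Qed.

Theorem mainTheorem16
  (m I : nat)
  (* problem data *)
  (X O : vec m -> Prop)
  (f : 'I_I -> vec m -> R) (gf : 'I_I -> vec m -> vec m) (L : 'I_I -> R)
  (G : vec m -> R)
  (HX : nonempty X /\ is_closed X /\ convex_set X)
  (HO : is_open O /\ set_incl X O)
  (Hf : forall i, C1_on O (f i) (gf i))
  (HL : forall i, 0 <= L i /\ lipschitz_on X (L i) (gf i))
  (HG : convex_on O G)
  (HV : exists c, forall x, X x -> c <= rsum (fun i => f i x) + G x)
  (* network *)
  (B : nat) (E : nat -> 'I_I -> 'I_I -> Prop) (kappa : R)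
  (a : nat -> 'I_I -> 'I_I -> R)
  (HB : (0 < B)%nat /\ B_strongly_connected B E)
  (Ha : compatible_weights kappa E a)
  (* surrogates, Assumption III.14: ft i x z = f~_i(x | z), gft i x z = grad_x f~_i(x | z) *)
  (ft : 'I_I -> vec m -> vec m -> R) (gft : 'I_I -> vec m -> vec m -> vec m)
  (tau Lt : 'I_I -> R)
  (Hsc : forall i z, X z -> strongly_convex_on (tau i) X (fun x => ft i x z))
  (HC1 : forall i z, X z -> C1_on O (fun x => ft i x z) (fun x => gft i x z))
  (Hcons : forall i x, X x -> gft i x x = gf i x)
  (HLt : forall i x, X x -> 0 <= Lt i /\ lipschitz_on X (Lt i) (fun z => gft i x z))
  (* SONATA iterates *)
  (gamma : nat -> R)
  (x xhalf y xt : nat -> 'I_I -> vec m) (phi : nat -> 'I_I -> R)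
  (Hgamma : forall k, 0 < gamma k <= 1)
  (Hx0 : forall i, X (x 0%nat i))
  (Hphi0 : forall i, phi 0%nat i = 1)
  (Hy0 : forall i, y 0%nat i = gf i (x 0%nat i))
  (Hxt : forall k i, is_argmin X
      (fun z => ft i z (x k i)
                + dot (vsub (vscale (INR I) (y k i)) (gf i (x k i))) (vsub z (x k i))
                + G z) (xt k i))
  (Hxhalf : forall k i,
      xhalf k i = vadd (x k i) (vscale (gamma k) (vsub (xt k i) (x k i))))
  (Hphi : forall k i, phi k.+1 i = rsum (fun j => a k i j * phi k j))
  (Hx : forall k i,
      x k.+1 i = vscale (/ phi k.+1 i) (vsum (fun j => vscale (a k i j * phi k j) (xhalf k j))))
  (Hy : forall k i,
      y k.+1 i = vadd (vscale (/ phi k.+1 i) (vsum (fun j => vscale (a k i j * phi k j) (y k j))))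
                      (vscale (/ phi k.+1 i) (vsub (gf i (x k.+1 i)) (gf i (x k i))))) :
  exists B2 : R, 0 < B2 /\
    forall (k : nat) (i : 'I_I) (w : vec m),
      (* w = xhat_i(x_(i)^k) *)
      is_argmin X
        (fun z => ft i z (x k i)
                  + dot (vsub (vsum (fun j => gf j (x k i))) (gf i (x k i))) (vsub z (x k i))
                  + G z) w ->
      norm (vsub (xt k i) w)
        <= B2 * ( norm (vsub (y k i) (vscale (/ INR I) (vsum (fun j => vscale (phi k j) (y k j)))))
                  + rsum (fun j => norm (vsub (x k j)
                                   (vscale (/ INR I) (vsum (fun l => vscale (phi k l) (x k l))))))).
Proof.
case: HX => [[z0 Xz0] [_ convX]]; case: HO => [_ XO].
case: Ha => [kappa_pos [a_ge0 [_ [_ [a_diag a_col_sum]]]]].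
have tau_pos j : 0 < tau j by case: (Hsc j z0 Xz0).
have a_diag_pos k i : 0 < a k i i by have := a_diag k i; lra.
have phi0_pos i : 0 < phi 0%nat i by rewrite Hphi0; lra.
have gamma01 k : 0 <= gamma k <= 1 by have := Hgamma k; lra.
have phi_pos := mixing_weights_pos a_ge0 a_diag_pos phi0_pos Hphi.
have Xx := mixed_iterates_in a_ge0 a_diag_pos phi0_pos Hphi convX gamma01 Hx0
  (fun k i => proj1 (Hxt k i)) Hxhalf Hx.
have tracking := weighted_tracking_sum a_col_sum phi_pos Hphi0 Hy0 Hy.
set Ls := rsum L; set T := rsum (fun j => / tau j).
have Ls0 : 0 <= Ls by apply: sum_ge0 => j; case: (HL j).
have T0 : 0 <= T by apply: sum_ge0 => j; apply: Rlt_le; apply: Rinv_0_lt_compat.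
exists (2 * T * (INR I + 2 * Ls) + 1); split; first by have := pos_INR I; nra.
move=> k i w Hw.
have := surrogate_step_gap_le
  (vscale (/ INR I) (vsum (fun l => vscale (phi k l) (x k l)))) convX XO (Hsc i _ (Xx k i)) HG HL
  (Xx k) (tracking k) (Hxt k i) Hw.
rewrite -/Ls => step; apply: Rle_trans step _.
apply: (scaled_affine_le (tau_pos i) _ (pos_INR I) Ls0 (norm_ge0 _)).
- rewrite /T /rsum; apply: (@sum_ge_term _ (fun j => / tau j)) => j.
  exact: Rlt_le (Rinv_0_lt_compat _ (tau_pos j)).
- by apply: sum_ge0 => j; exact: norm_ge0.
Qed.
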